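(* Let $\mathcal{S}=D_S\cup A\cup B$ with $D_S=\{0_20_2\rhd'\to 0_3\rhd',\ 1_20_2\rhd'\to\rhd',\ 1_2\rhd'\to2_3\rhd'\}$, and let $\mathcal{S}_1=\mathcal{S}\setminus\{0_20_2\rhd'\to0_3\rhd'\}$ and $\mathcal{S}_2=\mathcal{S}\setminus\{1_20_2\rhd'\to\rhd'\}$. Then (1) $\mathcal{S}_1$ is terminating if and only if every nonconvergent $S$-trajectory contains some $n\equiv1\pmod 8$; (2) $\mathcal{S}_2$ is terminating if and only if every nonconvergent $S$-trajectory contains some $n\equiv5\pmod8$.
   Context: $\mathbb{N}_{\mathrm{odd}}=\{1,3,5,\dots\}$ and $S:\mathbb{N}_{\mathrm{odd}}\to\mathbb{N}_{\mathrm{odd}}$ is $S(n)=(3n+1)/4$ if $n\equiv1\pmod8$, $S(n)=(n-1)/4$ if $n\equiv5\pmod 8$, $S(n)=(3n+1)/2$ if $n\equiv3\pmod4$. The $S$-trajectory of $n$ is $(n,S(n),S^2(n),\dots)$; it is nonconvergent if it does not contain $1$. An SRS induces $u\ell v\to urv$; terminating means no infinite rewrite sequence. Alphabet $\{0_2,1_2,0_3,1_3,2_3,\lhd,\rhd'\}$ (intended reading $\rhd'(x)=2x+1$); $A=\{0_20_3\to0_30_2,\ 0_21_3\to0_31_2,\ 0_22_3\to1_30_2,\ 1_20_3\to1_31_2,\ 1_21_3\to2_30_2,\ 1_22_3\to2_31_2\}$; $B=\{\lhd0_3\to\lhd1_2,\ \lhd1_3\to\lhd0_20_2,\ \lhd2_3\to\lhd0_21_2\}$.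 *)

From Stdlib Require Import List Arith.
Import ListNotations.

(* S(n) = (3n+1)/4 if n = 1 mod 8, (n-1)/4 if n = 5 mod 8, (3n+1)/2 if n = 3 mod 4.
   Only ever applied to odd n (S maps odd naturals to odd naturals);
   the value on even n is irrelevant. *)
Definition Smap (n : nat) : nat :=
  if Nat.eqb (n mod 8) 1 then (3 * n + 1) / 4
  else if Nat.eqb (n mod 8) 5 then (n - 1) / 4
  else (3 * n + 1) / 2.

Definition traj (n k : nat) : nat := Nat.iter k Smap n.

Definition nonconvergent (n : nat) : Prop := forall k, traj n k <> 1.

Inductive sym : Type :=
  | s0_2 | s1_2 | s0_3 | s1_3 | s2_3 | lhd | rhd'.

Definition word := list sym.
Definition rule := (word * word)%type.
Definition srs := list rule.

Definition step (R : srs) (x y : word) : Prop :=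
  exists u v l r, In (l, r) R /\ x = u ++ l ++ v /\ y = u ++ r ++ v.

Definition terminating (R : srs) : Prop :=
  ~ exists f : nat -> word, forall i, step R (f i) (f (S i)).

Definition A_rules : srs :=
  [ ([s0_2; s0_3], [s0_3; s0_2]);
    ([s0_2; s1_3], [s0_3; s1_2]);
    ([s0_2; s2_3], [s1_3; s0_2]);
    ([s1_2; s0_3], [s1_3; s1_2]);
    ([s1_2; s1_3], [s2_3; s0_2]);
    ([s1_2; s2_3], [s2_3; s1_2]) ].

Definition B_rules : srs :=
  [ ([lhd; s0_3], [lhd; s1_2]);
    ([lhd; s1_3], [lhd; s0_2; s0_2]);
    ([lhd; s2_3], [lhd; s0_2; s1_2]) ].

Definition DS_r1 : rule := ([s0_2; s0_2; rhd'], [s0_3; rhd']).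
Definition DS_r2 : rule := ([s1_2; s0_2; rhd'], [rhd']).
Definition DS_r3 : rule := ([s1_2; rhd'], [s2_3; rhd']).

Definition DS_rules : srs := [DS_r1; DS_r2; DS_r3].

Definition S_rules : srs := DS_rules ++ A_rules ++ B_rules.
Definition S1_rules : srs := [DS_r2; DS_r3] ++ A_rules ++ B_rules.
Definition S2_rules : srs := [DS_r1; DS_r3] ++ A_rules ++ B_rules.

(* A word  ◁ d_1 ... d_k ▷'  with binary digits 0_2, 1_2 and ternary digits
   0_3, 1_3, 2_3 is read as a mixed-radix numeral x (starting from 1), and
   encodes the odd number 2x+1.  The rules of A (swapping a binary digit past
   a ternary one) and of B (turning a ternary digit next to ◁ into binary
   digits) preserve this value, while every rule  p ▷' -> q ▷'  of D_S turns
   the numeral of n into the numeral of S(n) ([implements_S_step]).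

   (=>) If every nonconvergent trajectory meets the residue c (c = 1 for S_1,
   c = 5 for S_2), then so does every trajectory of an odd n > 1.  The
   lexicographic triple (sum over ▷' of the hitting time of residue c,
   number of ternary digits, binary/ternary inversions) then decreases
   under every rule, so the system terminates.

   (<=) From an odd nonconvergent n avoiding the residue c we build an
   infinite rewrite sequence: as long as the numeral has a ternary digit,
   an A- or B-rule applies to the leftmost one; once it is purely binary,
   n mod 8 <> c forces its last digits to match a D_S rule of the system,
   which performs one step of S.  The value stays "bad" forever. *)

From Stdlib Require Import List Arith Lia ZifyNat.
From Stdlib Require Import Classical ClassicalEpsilon ConstructiveEpsilon.
From Stdlib Require Import Relation_Operators Lexicographic_Product.
Import ListNotations.

Lemma traj_succ n k : traj n (S k) = traj (Smap n) k.
Proof. unfold traj. apply Nat.iter_succ_r. Qed.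

Ltac compute_Smap :=
  unfold Smap;
  repeat match goal with |- context [Nat.eqb ?a ?b] => destruct (Nat.eqb_spec a b) end;
  lia.

Lemma Smap_eq_1 m : Smap m = 1 -> m = 1 \/ m = 5.
Proof. intro H. revert H. compute_Smap. Qed.

Definition reaches (c n : nat) : Prop := exists k, traj n k mod 8 = c.

Definition trajectories_reach (c : nat) : Prop :=
  forall n, Nat.odd n = true -> nonconvergent n -> reaches c n.

(* A convergent trajectory of n <> 1 enters 1 through 5. *)
Lemma convergent_reaches_5 n : n <> 1 -> ~ nonconvergent n -> reaches 5 n.
Proof.
  intros Hn Hconv. apply not_all_not_ex in Hconv as [k Hk].
  destruct (epsilon_smallest (fun k => traj n k = 1) (fun k => Nat.eq_dec _ 1)
              (ex_intro _ k Hk)) as [[|m] [Hm Hmin]].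
  - contradiction.
  - exists m. change (Smap (traj n m) = 1) in Hm.
    destruct (Smap_eq_1 _ Hm) as [H1 | ->]; [| reflexivity].
    specialize (Hmin m H1). lia.
Qed.

Lemma reaches_of_trajectories_reach c :
  c = 1 \/ c = 5 -> trajectories_reach c -> forall z, 1 <= z -> reaches c (2 * z + 1).
Proof.
  intros Hc Hyp z Hz.
  assert (Hodd : Nat.odd (2 * z + 1) = true) by (apply Nat.odd_spec; exists z; lia).
  destruct (classic (nonconvergent (2 * z + 1))) as [Hnc | Hconv]; [now apply Hyp|].
  destruct Hc as [-> | ->].
  - apply not_all_not_ex in Hconv as [k Hk]. exists k. now rewrite Hk.
  - apply convergent_reaches_5; [lia | exact Hconv].
Qed.

(* The first time the trajectory of n meets c (junk value if it never does). *)
Definition hitting_time (c n : nat) : nat :=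
  epsilon (inhabits 0) (fun k => traj n k mod 8 = c /\ forall j, traj n j mod 8 = c -> k <= j).

Lemma hitting_time_spec c n : reaches c n ->
  traj n (hitting_time c n) mod 8 = c /\
  forall j, traj n j mod 8 = c -> hitting_time c n <= j.
Proof.
  intro Hr. unfold hitting_time. apply epsilon_spec.
  destruct (epsilon_smallest _ (fun k => Nat.eq_dec (traj n k mod 8) c) Hr) as [k Hk].
  now exists k.
Qed.

Lemma hitting_time_Smap c n : n mod 8 <> c -> reaches c n ->
  hitting_time c (Smap n) < hitting_time c n.
Proof.
  intros Hn Hr. destruct (hitting_time_spec c n Hr) as [Hhit _].
  destruct (hitting_time c n) as [|k]; [contradiction|].
  rewrite traj_succ in Hhit.
  destruct (hitting_time_spec c (Smap n) (ex_intro _ k Hhit)) as [_ Hmin].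
  specialize (Hmin k Hhit). lia.
Qed.

Definition push_digit (x : nat) (s : sym) : nat :=
  match s with
  | s0_2 => 2 * x | s1_2 => 2 * x + 1
  | s0_3 => 3 * x | s1_3 => 3 * x + 1 | s2_3 => 3 * x + 2
  | lhd | rhd' => x
  end.

Definition value (x : nat) (u : word) : nat := fold_left push_digit u x.

Lemma value_app x u v : value x (u ++ v) = value (value x u) v.
Proof. apply fold_left_app. Qed.

(* Numerals never shrink, so every block is read from a positive value. *)
Lemma value_ge x u : x <= value x u.
Proof.
  revert x. induction u as [|s u IH]; intro x; [reflexivity|].
  change (x <= value (push_digit x s) u).
  transitivity (push_digit x s); [destruct s; cbn; lia | apply IH].
Qed.

Definition binary (s : sym) : bool := match s with s0_2 | s1_2 => true | _ => false end.
Definition ternary (s : sym) : bool :=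
  match s with s0_3 | s1_3 | s2_3 => true | _ => false end.
Definition digit (s : sym) : bool := binary s || ternary s.

Definition binary_word (u : word) : Prop := Forall (fun s => binary s = true) u.
Definition digit_word (u : word) : Prop := Forall (fun s => digit s = true) u.

Lemma digit_word_app u v : digit_word (u ++ v) <-> digit_word u /\ digit_word v.
Proof. apply Forall_app. Qed.

Lemma binary_digit_word u : binary_word u -> digit_word u.
Proof. apply Forall_impl. intros s Hs. unfold digit. now rewrite Hs. Qed.

(* The rules p ▷' -> q ▷' of D_S: on digit words p, q they send the
   number 2x+1 whose numeral ends in p to S(2x+1), avoiding residue c. *)
Definition implements_S_step (c : nat) (p q : word) : Prop :=
  digit_word p /\ digit_word q /\
  forall y, (2 * value y p + 1) mod 8 <> c /\
            Smap (2 * value y p + 1) = 2 * value y q + 1.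

Lemma DS_r1_implements : implements_S_step 5 [s0_2; s0_2] [s0_3].
Proof.
  split; [repeat constructor|]. split; [repeat constructor|].
  intro y. cbn [value fold_left push_digit]. split; [lia | compute_Smap].
Qed.

Lemma DS_r2_implements : implements_S_step 1 [s1_2; s0_2] [].
Proof.
  split; [repeat constructor|]. split; [repeat constructor|].
  intro y. cbn [value fold_left push_digit]. split; [lia | compute_Smap].
Qed.

Lemma DS_r3_implements c : c = 1 \/ c = 5 -> implements_S_step c [s1_2] [s2_3].
Proof.
  intro Hc.
  split; [repeat constructor|]. split; [repeat constructor|].
  intro y. cbn [value fold_left push_digit]. split; [lia | compute_Smap].
Qed.

Lemma A_rule_shape l r : In (l, r) A_rules ->
  exists b t t' b', l = [b; t] /\ r = [t'; b'] /\
    binary b = true /\ ternary t = true /\ ternary t' = true /\ binary b' = true /\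
    forall y, value y l = value y r.
Proof.
  intro H. repeat destruct H as [H | H]; try contradiction; injection H as <- <-;
    do 4 eexists; repeat split; intro y; cbn; lia.
Qed.

Lemma A_rule_exists b t : binary b = true -> ternary t = true ->
  exists t' b', In ([b; t], [t'; b']) A_rules /\ digit t' = true /\ digit b' = true /\
    forall y, value y [b; t] = value y [t'; b'].
Proof.
  intros Hb Ht. destruct b; try discriminate; destruct t; try discriminate;
    do 2 eexists; (split; [cbn; tauto|]); repeat split; intro y; cbn; lia.
Qed.

Lemma B_rule_shape l r : In (l, r) B_rules ->
  exists t r', l = [lhd; t] /\ r = lhd :: r' /\ ternary t = true /\
    binary_word r' /\ value 1 r' = value 1 [t].
Proof.
  intro H. repeat destruct H as [H | H]; try contradiction; injection H as <- <-;
    do 2 eexists; repeat split; repeat constructor.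
Qed.

Lemma B_rule_exists t : ternary t = true ->
  exists r', In ([lhd; t], lhd :: r') B_rules /\ binary_word r' /\ value 1 r' = value 1 [t].
Proof.
  intro Ht. destruct t; try discriminate;
    eexists; (split; [cbn; tauto|]); split; repeat constructor.
Qed.

Fixpoint potential (c x : nat) (w : word) : nat :=
  match w with
  | [] => 0
  | lhd :: w' => potential c 1 w'
  | rhd' :: w' => hitting_time c (2 * x + 1) + potential c 1 w'
  | s :: w' => potential c (push_digit x s) w'
  end.

Lemma potential_digits c x p v : digit_word p ->
  potential c x (p ++ v) = potential c (value x p) v.
Proof.
  intro Hp. revert x. induction Hp as [|s p Hs _ IH]; intro x; [reflexivity|].
  destruct s; try discriminate; apply IH.
Qed.

Lemma potential_context_eq c u z1 z2 :
  (forall y, 1 <= y -> potential c y z1 = potential c y z2) ->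
  forall x, 1 <= x -> potential c x (u ++ z1) = potential c x (u ++ z2).
Proof.
  intro H. induction u as [|s u IH]; intros x Hx; [auto|].
  destruct s; cbn; rewrite IH by lia; reflexivity.
Qed.

Lemma potential_context_lt c u z1 z2 :
  (forall y, 1 <= y -> potential c y z1 < potential c y z2) ->
  forall x, 1 <= x -> potential c x (u ++ z1) < potential c x (u ++ z2).
Proof.
  intro H. induction u as [|s u IH]; intros x Hx; [auto|].
  destruct s; cbn; try (apply IH; lia). specialize (IH 1 (le_n 1)). lia.
Qed.

Definition ternary_count (w : word) : nat := length (filter ternary w).

Lemma ternary_count_app u v : ternary_count (u ++ v) = ternary_count u + ternary_count v.
Proof. unfold ternary_count. now rewrite filter_app, length_app. Qed.

Lemma ternary_count_binary u : binary_word u -> ternary_count u = 0.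
Proof. induction 1 as [|s u Hs _ IH]; [reflexivity|]. now destruct s. Qed.

(* Pairs (binary digit, later ternary digit); b counts the binary digits read. *)
Fixpoint inversions (b : nat) (w : word) : nat :=
  match w with
  | [] => 0
  | s :: w' => (if ternary s then b else 0) + inversions (if binary s then S b else b) w'
  end.

Lemma inversions_context u z1 z2 : (forall b, inversions b z1 < inversions b z2) ->
  forall b, inversions b (u ++ z1) < inversions b (u ++ z2).
Proof.
  intro H. induction u as [|s u IH]; intro b; [apply H|].
  cbn. specialize (IH (if binary s then S b else b)). lia.
Qed.

Definition measure (c : nat) (w : word) : nat * (nat * nat) :=
  (potential c 1 w, (ternary_count w, inversions 0 w)).

Definition measure_lt : nat * (nat * nat) -> nat * (nat * nat) -> Prop :=
  slexprod nat (nat * nat) lt (slexprod nat nat lt lt).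

Lemma measure_lt_wf : well_founded measure_lt.
Proof. apply wf_slexprod; [| apply wf_slexprod]; apply lt_wf. Qed.

(* A-rules keep the potential and the ternary digits, and remove an inversion. *)
Lemma A_step_decreases c u v l r : In (l, r) A_rules ->
  measure_lt (measure c (u ++ r ++ v)) (measure c (u ++ l ++ v)).
Proof.
  intro H.
  destruct (A_rule_shape l r H) as (b & t & t' & b' & -> & -> & Hb & Ht & Ht' & Hb' & Hv).
  assert (Hdig : digit_word [b; t] /\ digit_word [t'; b'])
    by (destruct b, t, t', b'; try discriminate; split; repeat constructor).
  assert (Hcount : ternary_count [t'; b'] = ternary_count [b; t])
    by (destruct b, t, t', b'; try discriminate; reflexivity).
  assert (Hinv : forall k, inversions k ([t'; b'] ++ v) < inversions k ([b; t] ++ v))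
    by (intro k; destruct b, t, t', b'; try discriminate; cbn; lia).
  unfold measure.
  rewrite (potential_context_eq c u ([t'; b'] ++ v) ([b; t] ++ v)); [| | lia].
  - rewrite !ternary_count_app, Hcount. apply right_slex, right_slex, inversions_context, Hinv.
  - intros y _. rewrite !potential_digits by apply Hdig. now rewrite Hv.
Qed.

(* B-rules keep the potential and remove a ternary digit. *)
Lemma B_step_decreases c u v l r : In (l, r) B_rules ->
  measure_lt (measure c (u ++ r ++ v)) (measure c (u ++ l ++ v)).
Proof.
  intro H. destruct (B_rule_shape l r H) as (t & r' & -> & -> & Ht & Hr' & Hv).
  unfold measure.
  rewrite (potential_context_eq c u ((lhd :: r') ++ v) ([lhd; t] ++ v)).
  - apply right_slex, left_slex. rewrite !ternary_count_app.
    change (ternary_count (lhd :: r')) with (ternary_count r').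
    rewrite (ternary_count_binary r' Hr'). unfold ternary_count; cbn. rewrite Ht. cbn. lia.
  - intros y _. cbn [app potential].
    rewrite (potential_digits c 1 r') by now apply binary_digit_word.
    rewrite Hv. destruct t; try discriminate; reflexivity.
  - lia.
Qed.

(* A D_S-rule replaces the hitting time from n by the one from S(n). *)
Lemma DS_step_decreases c u v p q :
  (forall y, 1 <= y -> reaches c (2 * value y p + 1)) -> implements_S_step c p q ->
  measure_lt (measure c (u ++ (q ++ [rhd']) ++ v)) (measure c (u ++ (p ++ [rhd']) ++ v)).
Proof.
  intros Hreach (Hp & Hq & Hsim). apply left_slex, potential_context_lt; [| lia].
  intros y Hy. rewrite <- !app_assoc.
  rewrite (potential_digits c y p), (potential_digits c y q) by assumption. cbn [app potential].
  destruct (Hsim y) as [Hres Hstep]. rewrite <- Hstep.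
  pose proof (hitting_time_Smap c _ Hres (Hreach y Hy)). lia.
Qed.

Lemma terminating_of_measure {M : Type} (lt_M : M -> M -> Prop) (m : word -> M) R :
  well_founded lt_M -> (forall x y, step R x y -> lt_M (m y) (m x)) -> terminating R.
Proof.
  intros Hwf Hdec [f Hf].
  enough (H : forall a, Acc lt_M a -> forall i, m (f i) = a -> False)
    by exact (H _ (Hwf (m (f 0))) 0 eq_refl).
  intros a Hacc. induction Hacc as [a _ IH]. intros i <-.
  exact (IH _ (Hdec _ _ (Hf i)) (S i) eq_refl).
Qed.

Theorem terminating_of_reach c R : c = 1 \/ c = 5 -> trajectories_reach c ->
  (forall ru, In ru R -> In ru (A_rules ++ B_rules) \/
     exists p q, ru = (p ++ [rhd'], q ++ [rhd']) /\ implements_S_step c p q) ->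
  terminating R.
Proof.
  intros Hc Hyp HR. apply (terminating_of_measure measure_lt (measure c)); [exact measure_lt_wf|].
  intros x y (u & v & l & r & Hin & -> & ->).
  destruct (HR _ Hin) as [HAB | (p & q & E & Hpq)].
  - apply in_app_or in HAB as [HA | HB];
      [apply A_step_decreases | apply B_step_decreases]; assumption.
  - injection E as -> ->. apply DS_step_decreases; [| exact Hpq].
    intros y Hy. apply (reaches_of_trajectories_reach c Hc Hyp).
    pose proof (value_ge y p). lia.
Qed.

Definition bad (c n : nat) : Prop := nonconvergent n /\ forall k, traj n k mod 8 <> c.

Lemma bad_Smap c n : bad c n -> bad c (Smap n).
Proof. intros [Hnc Hav]. split; intro k; rewrite <- traj_succ; auto. Qed.

(* 1, 3 and 5 converge, and the residue of n itself is not c. *)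
Lemma bad_small c n : bad c n -> n <> 1 /\ n <> 3 /\ n <> 5 /\ n mod 8 <> c.
Proof.
  intros [Hnc Hav]. repeat split; [intros -> .. |].
  - exact (Hnc 0 eq_refl).
  - exact (Hnc 2 eq_refl).
  - exact (Hnc 1 eq_refl).
  - exact (Hav 0).
Qed.

Definition configuration (c : nat) (w : word) : Prop :=
  exists u, digit_word u /\ w = lhd :: u ++ [rhd'] /\ bad c (2 * value 1 u + 1).

(* Every positive integer has a binary numeral (with leading digit 1 implicit). *)
Lemma binary_numeral x : 1 <= x -> exists u, binary_word u /\ value 1 u = x.
Proof.
  induction x as [x IH] using (well_founded_induction lt_wf). intro Hx.
  destruct (Nat.eq_dec x 1) as [-> | Hne]; [exists []; split; [constructor | reflexivity]|].
  destruct (IH (x / 2) ltac:(lia) ltac:(lia)) as (u & Hu & Hv).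
  exists (u ++ [if Nat.eqb (x mod 2) 0 then s0_2 else s1_2]). split.
  - apply Forall_app. split; [exact Hu|]. destruct (Nat.eqb _ _); repeat constructor.
  - rewrite value_app, Hv.
    destruct (Nat.eqb_spec (x mod 2) 0); cbn [value fold_left push_digit]; lia.
Qed.

Lemma leftmost_ternary u : digit_word u -> binary_word u \/
  exists p t q, binary_word p /\ ternary t = true /\ u = p ++ t :: q.
Proof.
  induction 1 as [|s u Hs Hu IH]; [left; constructor|].
  destruct (binary s) eqn:Hb.
  - destruct IH as [IH | (p & t & q & Hp & Ht & ->)];
      [left; now constructor | right; exists (s :: p), t, q; now split; [constructor|]].
  - right. exists [], s, u. unfold digit in Hs. rewrite Hb in Hs. now split; [constructor|].
Qed.

Lemma configuration_of_value c u u' : digit_word u' -> value 1 u' = value 1 u ->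
  bad c (2 * value 1 u + 1) -> configuration c (lhd :: u' ++ [rhd']).
Proof. intros Hu' Hv Hbad. exists u'. now rewrite Hv. Qed.

Lemma ternary_step c R : incl A_rules R -> incl B_rules R ->
  forall p t q, binary_word p -> ternary t = true -> digit_word q ->
  bad c (2 * value 1 (p ++ t :: q) + 1) ->
  exists w', step R (lhd :: (p ++ t :: q) ++ [rhd']) w' /\ configuration c w'.
Proof.
  intros HA HB p t q Hp Ht Hq Hbad.
  destruct p as [|b p _] using rev_ind.
  - destruct (B_rule_exists t Ht) as (r' & Hin & Hr' & Hv).
    exists (lhd :: (r' ++ q) ++ [rhd']). split.
    + exists [], (q ++ [rhd']), [lhd; t], (lhd :: r').
      split; [now apply HB|]. cbn. now rewrite <- app_assoc.
    + apply (configuration_of_value c (t :: q)); [| now rewrite !value_app, Hv | exact Hbad].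
      apply digit_word_app. split; [now apply binary_digit_word | exact Hq].
  - apply Forall_app in Hp as [Hp Hb]. apply Forall_inv in Hb.
    destruct (A_rule_exists b t Hb Ht) as (t' & b' & Hin & Ht' & Hb' & Hv).
    exists (lhd :: (p ++ [t'; b'] ++ q) ++ [rhd']). split.
    + exists (lhd :: p), (q ++ [rhd']), [b; t], [t'; b'].
      split; [now apply HA|]. cbn. now rewrite <- !app_assoc.
    + apply (configuration_of_value c ((p ++ [b]) ++ t :: q)); [| | exact Hbad].
      * apply digit_word_app. split; [now apply binary_digit_word|].
        now repeat constructor.
      * rewrite <- app_assoc. change ([b] ++ t :: q) with ([b; t] ++ q).
        now rewrite !value_app, Hv.
Qed.

Lemma simulation_step c R u0 p q : In (p ++ [rhd'], q ++ [rhd']) R ->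
  implements_S_step c p q -> digit_word u0 -> bad c (2 * value 1 (u0 ++ p) + 1) ->
  exists w', step R (lhd :: (u0 ++ p) ++ [rhd']) w' /\ configuration c w'.
Proof.
  intros Hin (Hp & Hq & Hsim) Hu0 Hbad. exists (lhd :: (u0 ++ q) ++ [rhd']). split.
  - exists (lhd :: u0), [], (p ++ [rhd']), (q ++ [rhd']).
    split; [exact Hin|]. rewrite !app_nil_r. cbn. now rewrite !app_assoc.
  - exists (u0 ++ q). split; [now apply digit_word_app|]. split; [reflexivity|].
    rewrite value_app, <- (proj2 (Hsim _)), <- value_app. now apply bad_Smap.
Qed.

Definition binary_case_covered (c : nat) (R : srs) : Prop :=
  forall u, binary_word u -> bad c (2 * value 1 u + 1) ->
  exists u0 p q, u = u0 ++ p /\ binary_word u0 /\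
    In (p ++ [rhd'], q ++ [rhd']) R /\ implements_S_step c p q.

Lemma configuration_step c R : incl A_rules R -> incl B_rules R ->
  binary_case_covered c R ->
  forall w, configuration c w -> exists w', step R w w' /\ configuration c w'.
Proof.
  intros HA HB Hbin w (u & Hu & -> & Hbad).
  destruct (leftmost_ternary u Hu) as [Hb | (p & t & q & Hp & Ht & ->)].
  - destruct (Hbin u Hb Hbad) as (u0 & p & q & -> & Hu0 & Hin & Hpq).
    apply simulation_step with q; auto using binary_digit_word.
  - apply ternary_step; auto.
    apply digit_word_app in Hu as [_ Htq]. now apply Forall_inv_tail in Htq.
Qed.

Lemma not_terminating_of_invariant R (I : word -> Prop) w0 : I w0 ->
  (forall w, I w -> exists w', step R w w' /\ I w') -> ~ terminating R.
Proof.
  intros H0 Hstep Hterm. apply Hterm.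
  set (next w := epsilon (inhabits w) (fun w' => step R w w' /\ I w')).
  assert (Hnext : forall w, I w -> step R w (next w) /\ I (next w))
    by (intros w Hw; apply epsilon_spec, Hstep, Hw).
  assert (HI : forall i, I (Nat.iter i next w0))
    by (induction i; [exact H0 | apply Hnext; assumption]).
  exists (fun i => Nat.iter i next w0). intro i. apply Hnext, HI.
Qed.

Theorem reach_of_terminating c R : incl A_rules R -> incl B_rules R ->
  binary_case_covered c R -> terminating R -> trajectories_reach c.
Proof.
  intros HA HB Hbin Hterm n Hodd Hnc. apply NNPP. intro Hno.
  assert (Hbad : bad c n) by (split; [exact Hnc | intros k Hk; apply Hno; now exists k]).
  apply Nat.odd_spec in Hodd as [m ->].
  destruct (binary_numeral m) as (u & Hu & Hv).
  { destruct m; [destruct (bad_small c 1 Hbad); contradiction | lia]. }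
  apply (not_terminating_of_invariant R (configuration c) (lhd :: u ++ [rhd'])); [| | exact Hterm].
  - exists u. rewrite Hv. auto using binary_digit_word.
  - apply configuration_step; assumption.
Qed.

Lemma bad_binary_endings c u : binary_word u -> bad c (2 * value 1 u + 1) ->
  exists u0, binary_word u0 /\
    (u = u0 ++ [s1_2] \/ u = u0 ++ [s1_2; s0_2] \/ u = u0 ++ [s0_2; s0_2]).
Proof.
  intros Hu Hbad. pose proof (bad_small c _ Hbad) as (H1 & H3 & H5 & _).
  destruct u as [|d u _] using rev_ind; [contradiction|].
  apply Forall_app in Hu as [Hu Hd]. apply Forall_inv in Hd.
  destruct d; try discriminate; [| now exists u; split; [|left]].
  destruct u as [|d' u _] using rev_ind; [contradiction|].
  apply Forall_app in Hu as [Hu Hd']. apply Forall_inv in Hd'.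
  exists u. split; [exact Hu|]. right. rewrite <- app_assoc.
  destruct d'; try discriminate; [right | left]; reflexivity.
Qed.

(* In S_1 the endings 1 and 10 are D_S-redexes; the ending 00 gives n mod 8 = 1. *)
Lemma S1_binary_case : binary_case_covered 1 S1_rules.
Proof.
  intros u Hu Hbad.
  destruct (bad_binary_endings 1 u Hu Hbad) as (u0 & Hu0 & [-> | [-> | ->]]).
  - exists u0, [s1_2], [s2_3]. split; [reflexivity|].
    split; [exact Hu0|]. split; [cbn; tauto | exact (DS_r3_implements 1 (or_introl eq_refl))].
  - exists u0, [s1_2; s0_2], []. split; [reflexivity|].
    split; [exact Hu0|]. split; [cbn; tauto | exact DS_r2_implements].
  - destruct (bad_small 1 _ Hbad) as (_ & _ & _ & Hres). rewrite value_app in Hres.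
    cbn [value fold_left push_digit] in Hres. lia.
Qed.

(* In S_2 the endings 1 and 00 are D_S-redexes; the ending 10 gives n mod 8 = 5. *)
Lemma S2_binary_case : binary_case_covered 5 S2_rules.
Proof.
  intros u Hu Hbad.
  destruct (bad_binary_endings 5 u Hu Hbad) as (u0 & Hu0 & [-> | [-> | ->]]).
  - exists u0, [s1_2], [s2_3]. split; [reflexivity|].
    split; [exact Hu0|]. split; [cbn; tauto | exact (DS_r3_implements 5 (or_intror eq_refl))].
  - destruct (bad_small 5 _ Hbad) as (_ & _ & _ & Hres). rewrite value_app in Hres.
    cbn [value fold_left push_digit] in Hres. lia.
  - exists u0, [s0_2; s0_2], [s0_3]. split; [reflexivity|].
    split; [exact Hu0|]. split; [cbn; tauto | exact DS_r1_implements].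
Qed.

Theorem mainTheorem12 :
  (terminating S1_rules <->
     (forall n, Nat.odd n = true -> nonconvergent n ->
        exists k, traj n k mod 8 = 1)) /\
  (terminating S2_rules <->
     (forall n, Nat.odd n = true -> nonconvergent n ->
        exists k, traj n k mod 8 = 5)).
Proof.
  assert (HA : forall R1 : srs, incl A_rules (R1 ++ A_rules ++ B_rules))
    by (intro; apply incl_appr, incl_appl, incl_refl).
  assert (HB : forall R1 : srs, incl B_rules (R1 ++ A_rules ++ B_rules))
    by (intro; apply incl_appr, incl_appr, incl_refl).
  split; split.
  - exact (reach_of_terminating 1 S1_rules (HA _) (HB _) S1_binary_case).
  - intro Hyp. apply (terminating_of_reach 1); [now left | exact Hyp |].
    intros ru [<- | [<- | Hin]]; [right.. | now left].
    + exists [s1_2; s0_2], []. split; [reflexivity | exact DS_r2_implements].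
    + exists [s1_2], [s2_3]. split; [reflexivity | exact (DS_r3_implements 1 (or_introl eq_refl))].
  - exact (reach_of_terminating 5 S2_rules (HA _) (HB _) S2_binary_case).
  - intro Hyp. apply (terminating_of_reach 5); [now right | exact Hyp |].
    intros ru [<- | [<- | Hin]]; [right.. | now left].
    + exists [s0_2; s0_2], [s0_3]. split; [reflexivity | exact DS_r1_implements].
    + exists [s1_2], [s2_3]. split; [reflexivity | exact (DS_r3_implements 5 (or_intror eq_refl))].
Qed.
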